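(* Let $X$ be a complete separable metric space, let $E\subset X$ with $\mathcal{H}^n(E)<\infty$, and for each $m\in\mathbb{N}$ let $\nu_m$ be a finite Borel measure on $X$ with $\mathcal{H}^n|_E\ge\nu_1\ge\nu_2\ge\dots\ge0$ and $\|\nu_m\|\to0$. Then for $\mathcal{H}^n$-almost every $x\in X$, $$\lim_{m\to\infty}\lim_{r\to0}\frac{\nu_m(B(x,r))}{r^n}=0.$$
   Context: $\mathcal{H}^n$ is $n$-dimensional Hausdorff measure, $B(x,r)$ the closed ball, $\|\nu\|$ the total mass, and inequalities between measures are setwise. *)

From HB Require Import structures.
From mathcomp Require Import all_boot all_order all_algebra.
From mathcomp Require Import all_classical all_reals all_analysis.
Set Implicit Arguments. Unset Strict Implicit. Unset Printing Implicit Defensive.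
Import Order.TTheory GRing.Theory Num.Theory.
Import numFieldNormedType.Exports.
Local Open Scope classical_set_scope.
Local Open Scope ring_scope.

(* Volume of the unit ball of R^n: omega_0 = 1, omega_1 = 2,
   omega_(n+2) = 2 pi / (n+2) * omega_n  (= pi^(n/2) / Gamma(n/2+1)). *)
Fixpoint unit_ball_vol (R : realType) (n : nat) : R :=
  match n with
  | 0%N => 1
  | 1%N => 2
  | (k.+2)%N => (2 * pi / k.+2%:R) * unit_ball_vol R k
  end.

Definition cball (R : realType) (X : metricType R) (x : X) (r : R) : set X :=
  [set y | mdist x y <= r].

Definition diam (R : realType) (X : metricType R) (C : set X) : \bar R :=
  maxe 0%E (ereal_sup [set (mdist p.1 p.2)%:E | p in C `*` C]).

Definition haus_term (R : realType) (X : metricType R) (n : nat) (C : set X)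
  : \bar R :=
  if pselect (C = set0) then 0%E
  else if diam C == +oo%E then +oo%E
  else (unit_ball_vol R n / 2 ^+ n * (fine (diam C)) ^+ n)%:E.

Definition haus_delta (R : realType) (X : metricType R) (n : nat) (delta : R)
  (A : set X) : \bar R :=
  ereal_inf [set (\sum_(0 <= i <oo) haus_term n (C i))%E
            | C in [set C : nat -> set X |
                    A `<=` \bigcup_i C i /\ forall i, (diam (C i) <= delta%:E)%E]].

(* n-dimensional Hausdorff (outer) measure H^n = lim_{delta -> 0} H^n_delta
   = sup_{delta > 0} H^n_delta (the map delta |-> H^n_delta is nonincreasing). *)
Definition hausdorff (R : realType) (X : metricType R) (n : nat) (A : set X)
  : \bar R :=
  ereal_sup [set haus_delta n delta A | delta in [set d : R | 0 < d]].

(* MathComp-Analysis measurable types must be pointed, so the carrier is the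
   alias [borel_type x0] of X, pointed by a witness x0 : X (X nonempty). *)
Definition borel_type {R : realType} {X : metricType R} (x0 : X) : Type := X.
Section borel_instance.
Context (R : realType) (X : metricType R) (x0 : X).
HB.instance Definition _ := Choice.on (borel_type x0).
HB.instance Definition _ := isPointed.Build (borel_type x0) x0.
Lemma borel_sigmaC (A : set (borel_type x0)) :
  <<s @open X >> A -> <<s @open X >> (~` A).
Proof. by move=> sGA; rewrite -setTD; exact: sigma_algebraCD. Qed.
HB.instance Definition _ := @isMeasurable.Build (sigma_display (@open X))
  (borel_type x0) <<s @open X >> (@sigma_algebra0 _ setT _) (@borel_sigmaC)
  (@sigma_algebra_bigcup _ setT _).
End borel_instance.

From HB Require Import structures.
From mathcomp Require Import all_boot all_order all_algebra.
From mathcomp Require Import all_classical all_reals all_analysis.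
From mathcomp Require Import lra.
Import Order.TTheory GRing.Theory Num.Theory.
Import numFieldNormedType.Exports.
Local Open Scope classical_set_scope.
Local Open Scope ring_scope.

(* Let N be the set of points x at which the upper densities
   a_m(x) = limsup_(r -> 0+) nu_m(B(x,r)) / r^n, which decrease in m, do not
   tend to 0; each x in N has a_m(x) > 1/(k+1) for all m and some k = k(x).
   Given eps > 0, choose m_k with ||nu_(m_k)|| <= eps 2^-(k+1) / (k+1) and put
   mu = sum_k (k+1) nu_(m_k), a measure of mass at most eps.  Every x in N is
   then the centre of arbitrarily small balls with r^n <= mu(B(x,r)).  A Vitali
   subfamily of pairwise disjoint such balls is countable by separability and
   its balls of triple radius cover N, so
   H^n_delta(N) <= omega_n 3^n mu(X) <= omega_n 3^n eps.
   Only the monotonicity of (nu_m) and ||nu_m|| -> 0 are used: neither the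
   domination by H^n restricted to E, nor finiteness, nor completeness is. *)

Section closed_balls.
Context {R : realType} {X : metricType R}.

Lemma cball_closed (x : X) r : closed (cball x r).
Proof.
rewrite -[cball x r]setCK; apply: open_closedC; rewrite openE => y /=.
rewrite /cball /= => /negP; rewrite -ltNge => xy.
apply/metricType_numDomainType.nbhs_mdistP.
exists (mdist x y - r) => [|z /= yz xz]; first by rewrite /= subr_gt0.
by have := metric_triangle x z y; rewrite [mdist z y]metric_sym; lra.
Qed.

Lemma cball_measurable (x0 x : X) r :
  measurable (cball x r : set (borel_type x0)).
Proof.
rewrite -[cball x r]setCK; apply: measurableC; apply: sub_sigma_algebra.
by rewrite /= -closedC setCK; exact: cball_closed.
Qed.

Lemma cball_neg (x : X) r : r < 0 -> cball x r = set0.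
Proof.
move=> r0; apply/seteqP; split => // y; rewrite /cball /= => xy.
by have := mdist_ge0 x y; lra.
Qed.

Lemma cball_center (x : X) r : 0 <= r -> cball x r x.
Proof. by rewrite /cball /= mdistxx. Qed.

Lemma diam_ge0 (C : set X) : (0 <= diam C)%E.
Proof. by rewrite /diam le_max lexx. Qed.

Lemma diam_le (C : set X) d : 0 <= d ->
  (forall p q, C p -> C q -> mdist p q <= d) -> (diam C <= d%:E)%E.
Proof.
move=> d0 Cd; rewrite /diam ge_max lee_fin d0 /=.
by apply: ge_ereal_sup => _ [[p q] [/= Cp Cq] <-]; rewrite lee_fin; exact: Cd.
Qed.

Lemma diam_cball (x : X) r : 0 <= r -> (diam (cball x r) <= (2 * r)%:E)%E.
Proof.
move=> r0; apply: diam_le => [|p q]; first lra.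
rewrite /cball /= => xp xq.
by have := metric_triangle p x q; rewrite [mdist p x]metric_sym; lra.
Qed.

End closed_balls.

Lemma unit_ball_vol_ge0 (R : realType) n : 0 <= unit_ball_vol R n.
Proof.
elim/ltn_ind: n => -[|[|k]] IH //=.
by rewrite mulr_ge0 ?IH// divr_ge0// mulr_ge0// pi_ge0.
Qed.

Section hausdorff_content.
Context {R : realType} {X : metricType R} (n : nat).
Local Open Scope ereal_scope.

Lemma haus_term_ge0 (C : set X) : 0 <= haus_term n C.
Proof.
rewrite /haus_term; destruct (pselect _) => //; case: ifP => // _.
rewrite lee_fin mulr_ge0 ?divr_ge0 ?unit_ball_vol_ge0 ?exprn_ge0//.
by rewrite fine_ge0 ?diam_ge0.
Qed.

Lemma haus_term_set0 : haus_term n (@set0 X) = 0.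
Proof. by rewrite /haus_term; destruct (pselect _). Qed.

Lemma haus_term_le_diam (C : set X) (d : R) : (0 <= d)%R -> diam C <= d%:E ->
  haus_term n C <= (unit_ball_vol R n / 2 ^+ n * d ^+ n)%:E.
Proof.
move=> d0 Cd; rewrite /haus_term; destruct (pselect _).
  by rewrite lee_fin mulr_ge0 ?divr_ge0 ?unit_ball_vol_ge0 ?exprn_ge0.
move: Cd (diam_ge0 C); case: (diam C) => //= e; rewrite !lee_fin => ed e0.
by rewrite ler_wpM2l ?lerXn2r ?nnegrE ?divr_ge0 ?unit_ball_vol_ge0 ?exprn_ge0.
Qed.

Lemma haus_term_cball (x : X) r : (0 <= r)%R ->
  haus_term n (cball x r) <= (unit_ball_vol R n * r ^+ n)%:E.
Proof.
move=> r0; have r20 : (0 <= 2 * r)%R by rewrite mulr_ge0.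
have := haus_term_le_diam _ _ r20 (diam_cball x r r0).
by rewrite exprMn mulrA divfK ?expf_neq0.
Qed.

Lemma haus_delta_ge0 (delta : R) (A : set X) : 0 <= haus_delta n delta A.
Proof.
apply: le_ereal_inf_tmp => _ [C _ <-].
by apply: nneseries_ge0 => i _ _; exact: haus_term_ge0.
Qed.

Lemma hausdorff_eq0 (A : set X) :
  (forall delta eps : R, (0 < delta)%R -> (0 < eps)%R ->
    haus_delta n delta A <= eps%:E) -> hausdorff n A = 0.
Proof.
move=> small; apply/eqP; rewrite eq_le; apply/andP; split.
  apply: ge_ereal_sup => _ [delta delta0 <-]; apply/lee_addgt0Pr => eps eps0.
  by rewrite add0e; exact: small.
apply: le_ereal_sup_tmp; exists (haus_delta n 1 A); last exact: haus_delta_ge0.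
by exists 1%R => //=; rewrite ltr01.
Qed.

End hausdorff_content.

Section limf_esup_lemmas.
Context {T : choiceType} {Y : filteredType T} {R : realType}.
Implicit Types (f g : Y -> \bar R) (F : set_system Y).
Local Open Scope ereal_scope.

Lemma le_limf_esup f g F :
  (forall y, f y <= g y) -> limf_esup f F <= limf_esup g F.
Proof.
move=> fg; apply: le_ereal_inf_tmp => _ [V FV <-].
apply: le_trans (ereal_inf_lbound _) _; first by exists V.
apply: ge_ereal_sup => _ [y Vy <-]; apply: le_trans (fg y) _.
by apply: ereal_sup_ubound; exists y.
Qed.

Lemma limf_esup_gt {f F V} {s : \bar R} :
  F V -> s < limf_esup f F -> exists2 y, V y & s < f y.
Proof.
move=> FV /lt_le_trans lt_s.
have /ereal_sup_gt [_ [y Vy <-]] : s < ereal_sup (f @` V).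
  by apply: lt_s; apply: ereal_inf_lbound; exists V.
by exists y.
Qed.

End limf_esup_lemmas.

Lemma nonincreasing_ncvg0_gt_inv {R : realType} {u : nat -> \bar R} :
  nonincreasing_seq u -> (forall m, (0 <= u m)%E) -> ~ (u @ \oo --> 0%E) ->
  exists k : nat, forall m, (k.+1%:R^-1%:E < u m)%E.
Proof.
move=> u_decr u_ge0 u_ncvg0.
have inf_le m : (ereal_inf (range u) <= u m)%E.
  by apply: ereal_inf_lbound; exists m.
have : (0 < ereal_inf (range u))%E.
  rewrite lt_def (le_ereal_inf_tmp _) ?andbT; last by move=> _ [m _ <-].
  apply/eqP => inf0; apply: u_ncvg0; rewrite -inf0.
  exact: ereal_nonincreasing_cvgn.
case: (ereal_inf _) inf_le => [l||] //= inf_le l0.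
  exists (Num.truncn l^-1) => m; apply: lt_le_trans (inf_le m).
  by rewrite lte_fin invf_plt ?posrE ?ltr0n// truncnS_gt.
by exists 0%N => m; apply: lt_le_trans (inf_le m); rewrite ltey.
Qed.

Section measure_series.
Context {d : measure_display} {T : measurableType d} {R : realType}.
Local Open Scope ereal_scope.

Lemma small_mass_majorant (nu : nat -> {measure set T -> \bar R}) (e : R) :
  (fun m => nu m setT) @ \oo --> 0 -> (0 < e)%R ->
  exists (M : nat -> nat) (mu : {measure set T -> \bar R}),
    mu setT <= e%:E /\ forall k A, k.+1%:R%:E * nu (M k) A <= mu A.
Proof.
move=> nu_cvg0 e0.
(* (k+1) ||nu_(M k)|| <= e 2^-(k+1), which sums to at most e. *)
have /choice [M nuM] k :
    exists m, nu m setT <= (e / (2 ^ k.+1)%:R / k.+1%:R)%:E.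
  have /nu_cvg0 [m _ num] :
      nbhs 0 [set y | y < (e / (2 ^ k.+1)%:R / k.+1%:R)%:E].
    apply: open_nbhs_nbhs; split; first exact: open_ereal_lt_ereal.
    by rewrite /= lte_fin !divr_gt0// ltr0n expn_gt0.
  by exists m; apply/ltW/num => /=.
pose w k : {nonneg R} := NngNum (ler0n R k.+1).
exists M, (mseries (fun k => mscale (w k) (nu (M k))) 0); split => /=.
  apply: le_trans (epsilon_trick0 xpredT (ltW e0)).
  apply: lee_nneseries => [k _ _|k _]; first by rewrite mule_ge0.
  apply: le_trans (lee_wpmul2l _ (nuM k)) _; first by rewrite lee_fin.
  by rewrite -EFinM lee_fin /= mulrC divfK.
move=> k A; apply: le_trans (nneseries_lim_ge k.+1 _) => [|i _ _]; last first.
  by rewrite mule_ge0.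
by rewrite big_nat_recr //= leeDr // sume_ge0 // => i _; rewrite mule_ge0.
Qed.

Lemma trivIset_nneseries_le_mass (mu : {measure set T -> \bar R})
    (F : nat -> set T) : (forall j, measurable (F j)) -> trivIset setT F ->
  \sum_(0 <= j <oo) mu (F j) <= mu setT.
Proof.
move=> mF tF; have <- : mu (\bigcup_j F j) = \sum_(0 <= j <oo) mu (F j).
  by rewrite measure_bigcup//; apply: eq_eseriesl => j; rewrite in_setT.
by apply: le_measure; rewrite ?inE//; exact: bigcup_measurable.
Qed.

End measure_series.

Section vitali_covering.
Context {R : realType} {X : metricType R} (A : set X) (rho : X -> R).

Let B y := cball y (rho y).
Let meets x G := exists2 y, G y & B x `&` B y !=set0.

(* The third clause makes maximal families cover A: a ball meeting the family
   meets one of at least half its radius. *)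
Let vitali_family G := [/\ G `<=` A, trivIset G B &
  forall x, A x -> meets x G ->
    exists y, [/\ G y, B x `&` B y !=set0 & rho x <= 2 * rho y]].

Lemma vitali_family_chain (F : set (set X)) :
  F `<=` vitali_family -> total_on F subset ->
  vitali_family (\bigcup_(G in F) G).
Proof.
move=> Fv Ftot; split.
- by move=> x [G /Fv[GA _ _] /GA].
- move=> i j [Gi FGi Gii] [Gj FGj Gjj].
  have [GiGj|GjGi] := Ftot _ _ FGi FGj.
  + by have [_ + _] := Fv _ FGj; apply => //; exact: GiGj.
  + by have [_ + _] := Fv _ FGi; apply => //; exact: GjGi.
- move=> x Ax [y [G FG Gy] Bxy]; have [_ _ /(_ x Ax)] := Fv _ FG.
  by case=> [|z [Gz Bxz rxz]]; [exists y | exists z; split => //; exists G].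
Qed.

Hypothesis rho_pos : forall x, A x -> 0 < rho x.
Variable K : R.
Hypothesis rho_le : forall x, A x -> rho x <= K.

Let B_center x : A x -> B x x.
Proof. by move=> Ax; apply: cball_center; exact/ltW/rho_pos. Qed.

Lemma vitali_family_grow G x : vitali_family G -> A x -> ~ meets x G ->
  exists H, G `<` H /\ vitali_family H.
Proof.
move=> [GA tG Gfar] Ax xG.
pose A' := [set x | A x /\ ~ meets x G].
have A'rho : has_sup (rho @` A').
  split; first by exists (rho x), x.
  by exists K => _ [z [Az _] <-]; exact: rho_le.
set s := sup (rho @` A').
have s0 : 0 < s.
  apply: lt_le_trans (rho_pos x Ax) _.
  by apply: sup_upper_bound => //; exists x.
have [_ [x1 [Ax1 x1G] <-] x1s] :=
  @sup_adherent _ _ (s / 2) (divr_gt0 s0 (ltr0n _ 2)) A'rho.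
have Gx1 : ~ G x1.
  by move=> Gx1; apply: x1G; exists x1 => //; exists x1; split; exact: B_center.
exists (G `|` [set x1]); split.
  by split=> [z Gz|GH]; [left | apply: Gx1; apply: GH; right].
split.
- by move=> z [/GA|->].
- move=> i j [Gi|->] [Gj|->] //; first exact: tG.
  + by move=> Bij; exfalso; apply: x1G; exists i => //; rewrite setIC.
  + by move=> Bij; exfalso; apply: x1G; exists j.
- move=> z Az [y Gy Bzy].
  have [zG|zG] := pselect (meets z G).
    by have [w [Gw Bzw rzw]] := Gfar _ Az zG; exists w; split => //; left.
  case: Gy => [Gy|yx1]; first by exfalso; apply: zG; exists y.
  rewrite yx1 in Bzy; exists x1; split => //; first by right.
  have : rho z <= s by apply: sup_upper_bound => //; exists z.
  by move: x1s; rewrite -/s; lra.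
Qed.

Theorem vitali_covering : exists G, [/\ G `<=` A, trivIset G B &
  forall x, A x -> exists2 y, G y & mdist y x <= 3 * rho y].
Proof.
have [G [[GA tG Gfar] Gmax]] := Zorn_bigcup vitali_family_chain.
have Gmeets x : A x -> meets x G.
  move=> Ax; apply: contrapT => xG.
  have [H [GH vH]] := vitali_family_grow _ _ (And3 GA tG Gfar) Ax xG.
  exact: Gmax GH vH.
exists G; split => // x Ax.
have [y [Gy [z [Bxz Byz]] rxy]] := Gfar x Ax (Gmeets x Ax).
exists y => //; move: Bxz Byz; rewrite /B /cball /= => xz yz.
by have := metric_triangle y z x; rewrite [mdist z x]metric_sym; lra.
Qed.

End vitali_covering.

Lemma countable_subsingleton_cover {T : Type} (G : set T) : countable G ->
  exists S : nat -> set T, [/\ G = \bigcup_j S j, trivIset setT S &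
    forall j, S j = set0 \/ exists2 y, G y & S j = [set y]].
Proof.
move=> /countable_injP [idx idx_inj].
exists (fun j => G `&` idx @^-1` [set j]); split.
- by apply/seteqP; split=> [y Gy|y [j _ []//]]; exists (idx y).
- by move=> i j _ _ [y [[_ <-] [_ <-]]].
- move=> j; have [[y [Gy yj]]|Sj0] := pselect (exists y, G y /\ idx y = j).
    right; exists y => //; apply/seteqP; split=> [z [Gz zj]|_ ->//].
    by apply: idx_inj; rewrite ?inE// zj yj.
  by left; apply/seteqP; split=> // y [Gy yj]; apply: Sj0; exists y.
Qed.

Section separable_metric.
Context {R : realType} {X : metricType R}.
Hypothesis X_separable : exists D : set X, countable D /\ closure D = setT.

Lemma trivIset_cball_countable (G : set X) (rho : X -> R) :
  (forall y, G y -> 0 < rho y) -> trivIset G (fun y => cball y (rho y)) ->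
  countable G.
Proof.
move=> rho_pos tG; have [D [/countable_injP [f f_inj] DT]] := X_separable.
have /choice [p pP] y : exists z, G y -> D z /\ mdist y z < rho y.
  have [Gy|nGy] := pselect (G y); last by exists y => /nGy.
  have /(_ _ (nbhsx_ballx y _ (rho_pos y Gy))) [z [Dz yz]] : closure D y.
    by rewrite DT.
  by exists z; rewrite ballEmdist in yz.
apply/countable_injP; exists (f \o p) => y y' /[!inE] Gy Gy' /= fp.
have [[Dp yp] [Dp' yp']] := (pP y Gy, pP y' Gy').
have pp : p y = p y' by apply: f_inj; rewrite ?inE.
apply: tG => //; exists (p y); split; first exact: ltW.
by rewrite /cball /= pp; exact: ltW.
Qed.

Variable x0 : X.
Local Open Scope ereal_scope.

Lemma haus_delta_le_mass (n : nat)
    (mu : {measure set (borel_type x0) -> \bar R}) (A : set X) (rho : X -> R)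
    (delta : R) : (0 <= delta)%R ->
  (forall x, A x -> (0 < rho x <= delta)%R) ->
  (forall x, A x -> (rho x ^+ n)%:E <= mu (cball x (rho x))) ->
  haus_delta n (6 * delta) A <= (unit_ball_vol R n * 3 ^+ n)%:E * mu setT.
Proof.
move=> delta0 rhoA massA.
have rho_pos x : A x -> (0 < rho x)%R by move=> /rhoA /andP[].
have rho_le x : A x -> (rho x <= delta)%R by move=> /rhoA /andP[].
have [G [GA tG Gcov]] := vitali_covering _ _ rho_pos _ rho_le.
have rhoG y : G y -> (0 < rho y)%R by move=> /GA /rho_pos.
have [S [GS tS Scases]] :=
  countable_subsingleton_cover _ (trivIset_cball_countable _ _ rhoG tG).
pose c := (unit_ball_vol R n * 3 ^+ n)%R.
pose C j := \bigcup_(y in S j) cball y (3 * rho y).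
pose Bs j := \bigcup_(y in S j) cball y (rho y).
have CBs j : [/\ measurable (Bs j : set (borel_type x0)),
    diam (C j) <= (6 * delta)%:E & haus_term n (C j) <= c%:E * mu (Bs j)].
  rewrite /C /Bs; have [->|[y /GA Ay ->]] := Scases j.
    rewrite !bigcup_set0 haus_term_set0 measure0 mule0; split => //.
    by apply: diam_le => //; rewrite mulr_ge0.
  rewrite !bigcup_set1; have /andP[ry ry_delta] := rhoA y Ay.
  have r3 : (0 <= 3 * rho y)%R by lra.
  split; first exact: cball_measurable.
  - by apply: le_trans (diam_cball y _ r3) _; rewrite lee_fin; lra.
  - apply: le_trans (haus_term_cball n y _ r3) _.
    rewrite exprMn mulrA EFinM lee_wpmul2l ?massA//.
    by rewrite lee_fin mulr_ge0 ?unit_ball_vol_ge0 ?exprn_ge0.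
apply: (@le_trans _ _ (\sum_(0 <= j <oo) haus_term n (C j))).
  apply: ereal_inf_lbound; exists C => //.
  split=> [x Ax|j]; last by case: (CBs j).
  have [y Gy yx] := Gcov x Ax; move: Gy; rewrite GS => -[j _ Sjy].
  by exists j => //; exists y.
apply: (@le_trans _ _ (\sum_(0 <= j <oo) c%:E * mu (Bs j))).
  apply: lee_nneseries => [j _ _|j _]; first exact: haus_term_ge0.
  by case: (CBs j).
rewrite nneseriesZl //; apply: lee_wpmul2l.
  by rewrite lee_fin mulr_ge0 ?unit_ball_vol_ge0 ?exprn_ge0.
apply: trivIset_nneseries_le_mass => [j|i j _ _ [z [[y Siy yz] [y' Sjy' y'z]]]].
  by case: (CBs j).
apply: tS => //; suff yy' : y = y' by exists y; split; rewrite // yy'.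
by apply: tG; rewrite ?GS; [exists i | exists j | exists z].
Qed.

End separable_metric.

Section upper_density_null.
Context {R : realType} {X : metricType R} (x0 : X) (n : nat).
Hypothesis X_separable : exists D : set X, countable D /\ closure D = setT.
Variable nu : nat -> {measure set (borel_type x0) -> \bar R}.
Hypothesis nu_decr : forall m (A : set (borel_type x0)), measurable A ->
  (nu m.+1 A <= nu m A)%E.
Hypothesis nu_mass : (fun m => nu m setT) @ \oo --> 0%E.
Local Open Scope ereal_scope.

Let density m x r := nu m (cball x r) * (r ^- n)%:E.
Let upper_density m x := limf_esup (density m x) 0%R^'+.

Lemma density_ge0 m x r : 0 <= density m x r.
Proof.
have [r0|r0] := ltP r 0%R; first by rewrite /density cball_neg// measure0 mul0e.
by rewrite mule_ge0// lee_fin invr_ge0 exprn_ge0.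
Qed.

Lemma upper_density_nonincreasing x :
  nonincreasing_seq (fun m => upper_density m x).
Proof.
apply/nonincreasing_seqP => m; apply: le_limf_esup => r.
have [r0|r0] := ltP r 0%R; first by rewrite /density cball_neg// !measure0.
apply: lee_wpmul2r; first by rewrite lee_fin invr_ge0 exprn_ge0.
by apply: nu_decr; exact: cball_measurable.
Qed.

Lemma density_gt_inv m x r (k : nat) : (0 < r)%R ->
  k.+1%:R^-1%:E < density m x r -> (r ^+ n)%:E <= k.+1%:R%:E * nu m (cball x r).
Proof.
rewrite /density => r0; case: (nu m (cball x r)) => [b||].
- rewrite -EFinM !lte_fin lee_fin => /ltW.
  by rewrite ler_pdivlMr ?exprn_gt0// -ler_pdivrMl.
- by rewrite gt0_muley ?leey// lte_fin.
- by rewrite gt0_mulNye ?lte_fin ?invr_gt0 ?exprn_gt0// ltNge leNye.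
Qed.

Lemma haus_delta_upper_density_ncvg0_le (delta eps : R) : (0 < delta)%R ->
  (0 < eps)%R ->
  haus_delta n delta [set x | ~ ((fun m => upper_density m x) @ \oo --> 0)]
    <= eps%:E.
Proof.
move=> delta0 eps0; set N := [set x | _].
have delta6 : (0 < delta / 6)%R by rewrite divr_gt0.
pose c := (unit_ball_vol R n * 3 ^+ n)%R.
have c0 : (0 <= c)%R by rewrite mulr_ge0 ?unit_ball_vol_ge0 ?exprn_ge0.
have c10 : (0 < c + 1)%R by rewrite ltr_wpDl.
have [M [mu [mu_mass mu_maj]]] :=
  small_mass_majorant _ _ nu_mass (divr_gt0 eps0 c10).
have /choice [k kN] x : exists k : nat,
    N x -> forall m, k.+1%:R^-1%:E < upper_density m x.
  have [Nx|nNx] := pselect (N x); last by exists 0%N => /nNx.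
  have u_ge0 m : 0 <= upper_density m x.
    by apply: limf_esup_ge0 => // r; exact: density_ge0.
  have [k ?] :=
    nonincreasing_ncvg0_gt_inv (upper_density_nonincreasing x) u_ge0 Nx.
  by exists k.
have /choice [rho rhoN] x : exists r : R,
    N x -> (0 < r <= delta / 6)%R /\ (r ^+ n)%:E <= mu (cball x r).
  have [Nx|nNx] := pselect (N x); last by exists 0%R => /nNx.
  have near_0 : (0%R : R)^'+ [set r | 0 < r <= delta / 6]%R.
    near=> r; apply/andP; split; near: r.
    - exact: nbhs_right_gt.
    - exact: nbhs_right_le.
  have [r /andP[r0 r_delta] ?] := limf_esup_gt near_0 (kN x Nx (M (k x))).
  exists r => _; split; first by rewrite r0.
  by apply: le_trans (mu_maj (k x) _); exact: density_gt_inv.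
have := haus_delta_le_mass X_separable x0 n mu N rho (delta / 6) (ltW delta6)
  (fun x Nx => (rhoN x Nx).1) (fun x Nx => (rhoN x Nx).2).
rewrite mulrC divfK// => /le_trans; apply.
apply: le_trans (lee_wpmul2l _ mu_mass) _; first by rewrite lee_fin.
rewrite -EFinM lee_fin mulrA ler_pdivrMr// -/c mulrC.
by rewrite ler_wpM2l ?ltW//; lra.
Unshelve. all: by end_near.
Qed.

End upper_density_null.

Theorem lemma5p5 (R : realType) (X : metricType R)
  (x0 : X)
  (X_complete : forall F : set_system X, ProperFilter F -> cauchy F -> exists x : X, F --> x)
  (X_separable : exists D : set X, countable D /\ closure D = setT)
  (n : nat) (E : set X) (HE : (hausdorff n E < +oo)%E)
  (nu : nat -> {measure set (borel_type x0) -> \bar R})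
  (nu_finite : forall m, (nu m setT < +oo)%E)
  (nu_le_HE : forall A : set (borel_type x0), measurable A ->
     (nu 0%N A <= hausdorff n (A `&` E))%E)
  (nu_decr : forall (m : nat) (A : set (borel_type x0)), measurable A ->
     (nu m.+1 A <= nu m A)%E)
  (nu_mass : (fun m => nu m setT) @ \oo --> 0%E) :
  exists N : set X, hausdorff n N = 0%E /\
    forall x : X, ~ N x ->
      (fun m : nat =>
         limf_esup (fun r : R => (nu m (cball x r) * (r ^- n)%:E)%E) 0%R^'+)
        @ \oo --> 0%E.
Proof.
exists [set x | ~ ((fun m => limf_esup
  (fun r : R => (nu m (cball x r) * (r ^- n)%:E)%E) 0%R^'+) @ \oo --> 0%E)].
split; last by move=> x /contrapT.
apply: hausdorff_eq0 => delta eps delta0 eps0.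
exact: (haus_delta_upper_density_ncvg0_le x0 n X_separable nu nu_decr nu_mass
  delta eps delta0 eps0).
Qed.
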